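(* Let $S$ be a square-free semigroup, $D$ a division ring, and let $(\alpha,\xi),(\beta,\zeta)\in Z^2(S,D^* )$ be 2-cocycles. If $[\beta,\zeta]=[\alpha^{\phi},\xi^{\phi}]$ in the thin 2-cohomology for some $\phi\in\mathrm{Aut}(S)$, then $D^{\beta}_{\zeta}S\cong D^{\alpha}_{\xi}S$ as rings. Consequently, for each $(\alpha,\xi)\in Z^2(S,D^* )$ there exists a normal $(\beta,\zeta)\in Z^2(S,D^* )$ with $D^{\beta}_{\zeta}S\cong D^{\alpha}_{\xi}S$.
   Context: $D$ is a division ring, $D^*$ its group of units, $\mathrm{Aut}(D)$ its group of ring automorphisms, and for $d\in D^*$, $\rho_d\in\mathrm{Aut}(D)$ is $\rho_d(x)=dxd^{-1}$. A square-free semigroup is a semigroup $S$ (product written $s\cdot t$) with zero $\theta$ together with a finite set $E\subseteq S$ of nonzero pairwise orthogonal idempotents such that $S=\bigcup_{e,f\in E}e\cdot S\cdot f$ and $|e\cdot S\cdot f\setminus\{\theta\}|\le 1$ for all $e,f\in E$. Write $S^*=S\setminus\{\theta\}$; each $s\in S^*$ satisfies $s=e\cdot s\cdot f$ for unique $e,f\in E$. $\mathrm{Aut}(S)$ is the group of semigroup automorphisms of $S$. Put $S^{<0>}=E$ and $S^{<n>}=\{(s_1,\dots,s_n)\in S^n: s_1\cdot s_2\cdots s_n\neq\theta\}$ for $n>0$; for a group $G$, $F^n(S,G)$ is the group (under pointwise multiplication) of functions $S^{<n>}\to G$. For $\alpha\in F^1(S,\mathrm{Aut}(D))$ and $\mu\in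 F^0(S,\mathrm{Aut}(D))$ write $\alpha_s=\alpha(s)$, $\mu_e=\mu(e)$. A 2-cocycle is a pair $(\alpha,\xi)\in F^1(S,\mathrm{Aut}(D))\times F^2(S,D^* )$ with $\alpha_s(\xi(t,u))\,\xi(s,t\cdot u)=\xi(s,t)\,\xi(s\cdot t,u)$ for all $(s,t,u)\in S^{<3>}$ and $\alpha_s\circ\alpha_t=\rho_{\xi(s,t)}\circ\alpha_{s\cdot t}$ for all $(s,t)\in S^{<2>}$; $Z^2(S,D^* )$ is the set of 2-cocycles. A 2-cocycle is normal if $\alpha_e=1_D$ and $\xi(e,e)=1$ for all $e\in E$. The group $F^0(S,\mathrm{Aut}(D))\ltimes F^1(S,D^* )$ acts on $Z^2(S,D^* )$ by $(\mu,\eta)*(\alpha,\xi)=(\beta,\zeta)$ where, for $s=e\cdot s\cdot f$, $t=f\cdot t\cdot g$ in $S^*$ with $s\cdot t\ne\theta$: $\mu_e\circ\beta_s\circ\mu_f^{-1}=\rho_{\eta(s)}\circ\alpha_s$ and $\mu_e(\zeta(s,t))=\eta(s)\,\alpha_s(\eta(t))\,\xi(s,t)\,\eta(s\cdot t)^{-1}$. The orbits form the thin 2-cohomology; $[\alpha,\xi]$ denotes the orbit of $(\alpha,\xi)$. For $\phi\in\mathrm{Aut}(S)$ define $(\alpha^{\phi},\xi^{\phi})$ by $\alpha^{\phi}_s=\alpha_{\phi(s)}$ and $\xi^{\phi}(s,t)=\xi(\phi(s),\phi(t))$. For $(\alpha,\xi)\in Z^2(S,D^* )$, $D^{\alpha}_{\xi}S$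 is the ring which is the left $D$-vector space with basis $S^*$ and multiplication extended by distributivity from $(d_1s)(d_2t)=d_1\,\alpha_s(d_2)\,\xi(s,t)\,(s\cdot t)$ if $s\cdot t\neq\theta$ and $0$ otherwise ($d_1,d_2\in D$, $s,t\in S^*$); in particular $sd=\alpha_s(d)s$ and $st=\xi(s,t)\,s\cdot t$. *)

From mathcomp Require Import all_boot all_order all_algebra.
Set Implicit Arguments. Unset Strict Implicit. Unset Printing Implicit Defensive.
Import GRing.Theory.
Local Open Scope ring_scope.

Section Defs.
Variable D : unitRingType.
Variable S : finType.
Variable mul : S -> S -> S.
Variable th : S.
Variable E : {set S}.

Definition division_ring (R : unitRingType) : Prop :=
  forall x : R, x != 0 -> x \is a GRing.unit.

Definition square_free : Prop :=
  (forall s t u, mul s (mul t u) = mul (mul s t) u) /\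
  (forall s, mul th s = th /\ mul s th = th) /\
  [/\ forall e, e \in E -> e != th /\ mul e e = e,
      forall e f, e \in E -> f \in E -> e != f -> mul e f = th,
      forall s, exists e f t, [/\ e \in E, f \in E & s = mul (mul e t) f]
    & forall e f, e \in E -> f \in E -> forall x y,
        x != th -> y != th ->
        (exists t, x = mul (mul e t) f) -> (exists t, y = mul (mul e t) f) ->
        x = y].

Definition semigroup_aut (phi : S -> S) : Prop :=
  bijective phi /\ forall s t, phi (mul s t) = mul (phi s) (phi t).

Definition ring_aut (a : D -> D) : Prop :=
  [/\ forall x y, a (x + y) = a x + a y,
      forall x y, a (x * y) = a x * a y,
      a 1 = 1 & bijective a].

Definition rho (d : D) (x : D) : D := d * x * d^-1.

(* 2-cocycles: alpha in F^1(S, Aut D) (values at th irrelevant),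
   xi in F^2(S, D^* ) (values outside S^<2> irrelevant). *)
Definition cocycle (alpha : S -> D -> D) (xi : S -> S -> D) : Prop :=
  [/\ forall s, s != th -> ring_aut (alpha s),
      forall s t, mul s t != th -> xi s t \is a GRing.unit,
      forall s t u, mul (mul s t) u != th ->
        alpha s (xi t u) * xi s (mul t u) = xi s t * xi (mul s t) u
    & forall s t, mul s t != th ->
        forall x, alpha s (alpha t x) = rho (xi s t) (alpha (mul s t) x)].

Definition normal_cocycle (alpha : S -> D -> D) (xi : S -> S -> D) : Prop :=
  forall e, e \in E -> (forall x, alpha e x = x) /\ xi e e = 1.

(* (mu, eta) * (alpha, xi) = (beta, zeta); the identity
   mu_e o beta_s o mu_f^-1 = rho_{eta s} o alpha_s is written in the
   equivalent form mu_e o beta_s = rho_{eta s} o alpha_s o mu_f. *)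
Definition acts_to (mu : S -> D -> D) (eta : S -> D)
    (alpha : S -> D -> D) (xi : S -> S -> D)
    (beta : S -> D -> D) (zeta : S -> S -> D) : Prop :=
  [/\ forall e, e \in E -> ring_aut (mu e),
      forall s, s != th -> eta s \is a GRing.unit,
      forall s e f, s != th -> e \in E -> f \in E -> s = mul (mul e s) f ->
        forall x, mu e (beta s x) = rho (eta s) (alpha s (mu f x))
    & forall s t e f g, e \in E -> f \in E -> g \in E ->
        s = mul (mul e s) f -> t = mul (mul f t) g -> mul s t != th ->
        mu e (zeta s t) = eta s * alpha s (eta t) * xi s t * (eta (mul s t))^-1].

(* equality of thin cohomology classes: (beta,zeta) lies in the orbit of
   (alpha,xi) *)
Definition cohomologous (alpha : S -> D -> D) (xi : S -> S -> D)
    (beta : S -> D -> D) (zeta : S -> S -> D) : Prop :=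
  exists mu eta, acts_to mu eta alpha xi beta zeta.

(* The ring D^alpha_xi S: elements are D-valued functions on S vanishing at th
   (coefficients w.r.t. the basis S^* ); addition is pointwise and
   multiplication is the twisted convolution below. *)
Definition skew_carrier (x : {ffun S -> D}) : Prop := x th = 0.

Definition skew_mul (alpha : S -> D -> D) (xi : S -> S -> D)
    (x y : {ffun S -> D}) : {ffun S -> D} :=
  [ffun u => if u == th then 0 else
     \sum_(s | s != th) \sum_(t | (t != th) && (mul s t == u))
        x s * alpha s (y t) * xi s t].

Definition skew_iso (beta : S -> D -> D) (zeta : S -> S -> D)
    (alpha : S -> D -> D) (xi : S -> S -> D) : Prop :=
  exists Phi : {ffun S -> D} -> {ffun S -> D},
    [/\ forall x, skew_carrier x -> skew_carrier (Phi x),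
        forall x y, skew_carrier x -> skew_carrier y -> Phi x = Phi y -> x = y,
        forall y, skew_carrier y -> exists2 x, skew_carrier x & Phi x = y,
        forall x y, skew_carrier x -> skew_carrier y -> Phi (x + y) = Phi x + Phi y
      & forall x y, skew_carrier x -> skew_carrier y ->
          Phi (skew_mul beta zeta x y) = skew_mul alpha xi (Phi x) (Phi y)].

End Defs.

(* A change of basis of D^alpha_xi S that rescales each basis vector s by a unit
   eta s and twists its coefficients by mu (lid s), where lid s is the unique
   idempotent of E with s = lid s * s, is a ring isomorphism onto the skew ring of
   the transformed cocycle; relabelling the basis along a semigroup automorphism
   phi is one as well.  Composing the two gives the first claim.  For the second,
   twisting by eta e = xi(e,e)^-1 on E (and 1 elsewhere) keeps a cocycle and makes
   it normal, because the cocycle identities force alpha_e = rho_{xi(e,e)}. *)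

From mathcomp Require Import all_boot all_order all_algebra.
Set Implicit Arguments. Unset Strict Implicit. Unset Printing Implicit Defensive.
Import GRing.Theory.
Local Open Scope ring_scope.

Section RingAut.
Variable D : unitRingType.
Implicit Types (a b : D -> D) (x y u d : D).

Lemma ring_aut0 a : ring_aut a -> a 0 = 0.
Proof. by case=> aD _ _ _; apply: (addrI (a 0)); rewrite addr0 -aD addr0. Qed.

Lemma ring_aut_sum a (I : finType) (P : pred I) (F : I -> D) :
  ring_aut a -> a (\sum_(i | P i) F i) = \sum_(i | P i) a (F i).
Proof. by move=> ha; case: (ha) => aD _ _ _; exact: (big_morph a aD (ring_aut0 ha)). Qed.

Lemma ring_aut_unit a u : ring_aut a -> u \is a GRing.unit ->
  a u \is a GRing.unit /\ a u^-1 = (a u)^-1.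
Proof.
case=> _ aM a1 _ hu.
have aV : a u * a u^-1 = 1 by rewrite -aM mulrV.
have Va : a u^-1 * a u = 1 by rewrite -aM mulVr.
have ua : a u \is a GRing.unit by apply/unitrP; exists (a u^-1).
by split=> //; apply: (mulrI ua); rewrite aV mulrV.
Qed.

Lemma rho_ring_aut d : d \is a GRing.unit -> ring_aut (rho d).
Proof.
move=> hd; split=> [x y | x y | | ]; rewrite /rho.
- by rewrite mulrDr mulrDl.
- by rewrite -!mulrA (mulKr hd).
- by rewrite mulr1 mulrV.
by exists (rho d^-1) => x; rewrite /rho invrK !mulrA ?mulVr ?mulrV // mul1r ?mulrVK ?mulrK.
Qed.

Lemma ring_aut_comp a b : ring_aut a -> ring_aut b -> ring_aut (a \o b).
Proof.
case=> aD aM a1 ab [bD bM b1 bb]; split=> [x y | x y | | ] /=.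
- by rewrite bD aD.
- by rewrite bM aM.
- by rewrite b1 a1.
exact: bij_comp.
Qed.

Lemma ring_aut_id : ring_aut (@id D).
Proof. by split=> //; exists id. Qed.

End RingAut.

Section SkewIso.
Variables (D : unitRingType) (S : finType) (mul : S -> S -> S) (th : S).
Implicit Types (alpha beta gamma : S -> D -> D) (xi zeta omega : S -> S -> D).

Lemma skew_iso_trans alpha xi beta zeta gamma omega :
  skew_iso mul th gamma omega beta zeta -> skew_iso mul th beta zeta alpha xi ->
  skew_iso mul th gamma omega alpha xi.
Proof.
move=> [F [F0 Finj Fsurj FD FM]] [G [G0 Ginj Gsurj GD GM]].
exists (G \o F); split=> [x hx | x y hx hy | z hz | x y hx hy | x y hx hy] /=.
- exact: G0 (F0 x hx).
- by move/(Ginj _ _ (F0 _ hx) (F0 _ hy)); apply: Finj.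
- have [y hy <-] := Gsurj z hz; have [x hx <-] := Fsurj y hy.
  by exists x.
- by rewrite FD // GD //; apply: F0.
- by rewrite FM // GM //; apply: F0.
Qed.

End SkewIso.

Section SquareFree.
Variables (S : finType) (mul : S -> S -> S) (th : S) (E : {set S}).
Hypothesis sqS : square_free mul th E.

Let mulA s t u : mul s (mul t u) = mul (mul s t) u.
Proof. by case: sqS. Qed.
Let mul0s s : mul th s = th.
Proof. by case: sqS => _ [h _]; case: (h s). Qed.
Let muls0 s : mul s th = th.
Proof. by case: sqS => _ [h _]; case: (h s). Qed.
Let idemE e : e \in E -> e != th /\ mul e e = e.
Proof. by case: sqS => _ [_ [h _ _ _]]; apply: h. Qed.
Let orthE e f : e \in E -> f \in E -> e != f -> mul e f = th.
Proof. by case: sqS => _ [_ [_ h _ _]]; apply: h. Qed.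
Let decompE s : exists e f t, [/\ e \in E, f \in E & s = mul (mul e t) f].
Proof. by case: sqS => _ [_ [_ _ h _]]; apply: h. Qed.

Lemma mul_neq_thl s t : mul s t != th -> s != th.
Proof. by apply: contra => /eqP ->; rewrite mul0s. Qed.

Lemma mul_neq_thr s t : mul s t != th -> t != th.
Proof. by apply: contra => /eqP ->; rewrite muls0. Qed.

Lemma idem_neq_th e : e \in E -> mul e e != th.
Proof. by move=> /idemE[]; move=> + ->. Qed.

Lemma idem_mul e : e \in E -> mul e e = e.
Proof. by move=> /idemE[]. Qed.

(* Outside the zero, [lid s] and [rid s] are the idempotents e, f of E with
   s = e s f; at th they are junk values. *)
Definition lid s := odflt th [pick e in E | mul e s == s].
Definition rid s := odflt th [pick f in E | mul s f == s].

Lemma idem_decomp s :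
  exists e f, [/\ e \in E, f \in E, mul e s = s & mul s f = s].
Proof.
have [e [f [t [he hf ->]]]] := decompE s.
by exists e, f; rewrite -!mulA (idem_mul hf) !mulA (idem_mul he).
Qed.

Lemma lid_spec s : lid s \in E /\ mul (lid s) s = s.
Proof.
rewrite /lid; case: pickP => [e /andP[he /eqP] | none] //=.
by have [e [f [he _ hes _]]] := idem_decomp s; have := none e; rewrite he hes eqxx.
Qed.

Lemma rid_spec s : rid s \in E /\ mul s (rid s) = s.
Proof.
rewrite /rid; case: pickP => [f /andP[hf /eqP] | none] //=.
by have [e [f [_ hf _ hsf]]] := idem_decomp s; have := none f; rewrite hf hsf eqxx.
Qed.

Lemma lid_in s : lid s \in E. Proof. exact: (lid_spec s).1. Qed.
Lemma rid_in s : rid s \in E. Proof. exact: (rid_spec s).1. Qed.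

Lemma lid_rid_decomp s : s = mul (mul (lid s) s) (rid s).
Proof. by rewrite (lid_spec s).2 (rid_spec s).2. Qed.

Lemma lid_uniq s e : s != th -> e \in E -> mul e s = s -> e = lid s.
Proof.
move=> sn he hes; case: (eqVneq e (lid s)) => // ne; case/eqP: sn.
have [hl hls] := lid_spec s.
by rewrite -hes -{1}hls mulA (orthE he hl ne) mul0s.
Qed.

Lemma rid_lid s t : mul s t != th -> rid s = lid t.
Proof.
move=> st; case: (eqVneq (rid s) (lid t)) => // ne; case/eqP: st.
have [hr hrs] := rid_spec s; have [hl hlt] := lid_spec t.
by rewrite -hrs -hlt -mulA (mulA (rid s)) (orthE hr hl ne) mul0s muls0.
Qed.

Lemma lid_mul s t : mul s t != th -> lid (mul s t) = lid s.
Proof.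
move=> st; have [hl hls] := lid_spec s.
by symmetry; apply: lid_uniq => //; rewrite mulA hls.
Qed.

Lemma lid_rid_mul s t : mul s t != th -> s = mul (mul (lid s) s) (lid t).
Proof. by move=> st; rewrite -(rid_lid st) -lid_rid_decomp. Qed.

Section Relabel.
Variables (D : unitRingType) (alpha : S -> D -> D) (xi : S -> S -> D).
Variable phi : S -> S.
Hypothesis phi_aut : semigroup_aut mul phi.

Lemma semigroup_aut_th : phi th = th.
Proof.
case: phi_aut => -[psi _ phiK] phiM.
by have := phiM th (psi th); rewrite mul0s phiK muls0.
Qed.

Lemma semigroup_aut_eq_th s : (phi s == th) = (s == th).
Proof.
case: phi_aut => -[psi psiK _] _.
by rewrite -{1}semigroup_aut_th (inj_eq (can_inj psiK)).
Qed.

Lemma skew_iso_relabel :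
  skew_iso mul th (fun s => alpha (phi s)) (fun s t => xi (phi s) (phi t)) alpha xi.
Proof.
case: (phi_aut) => -[psi psiK phiK] phiM.
have phi_inj := can_inj psiK.
exists (fun x => [ffun u => x (psi u)]).
split=> [x hx | x y hx hy | z hz | x y hx hy | x y hx hy].
- by rewrite /skew_carrier ffunE -semigroup_aut_th psiK.
- move=> /ffunP hxy; apply/ffunP => s.
  by have := hxy (phi s); rewrite !ffunE psiK.
- exists [ffun s => z (phi s)]; last by apply/ffunP => u; rewrite !ffunE phiK.
  by rewrite /skew_carrier ffunE semigroup_aut_th.
- by apply/ffunP => u; rewrite !ffunE.
apply/ffunP => u; rewrite !ffunE -semigroup_aut_eq_th phiK.
case: eqP => // _; rewrite [RHS](reindex_inj phi_inj) /=.
apply: eq_big => [s | s _]; first by rewrite semigroup_aut_eq_th.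
rewrite [RHS](reindex_inj phi_inj) /=.
apply: eq_big => [t | t _]; last by rewrite !ffunE !psiK.
by rewrite semigroup_aut_eq_th -phiM -{2}(phiK u) (inj_eq phi_inj).
Qed.

End Relabel.

Section TwistIso.
Variables (D : unitRingType) (alpha beta : S -> D -> D) (xi zeta : S -> S -> D).
Variables (mu : S -> D -> D) (eta : S -> D).
Hypothesis alpha_aut : forall s, s != th -> ring_aut (alpha s).
Hypothesis act : acts_to mul th E mu eta alpha xi beta zeta.

Let mu_aut s : ring_aut (mu (lid s)).
Proof. by case: act => h _ _ _; exact: h (lid_in s). Qed.

Let eta_unit s : s != th -> eta s \is a GRing.unit.
Proof. by case: act => _ h _ _; apply: h. Qed.

Definition twist_map (x : {ffun S -> D}) : {ffun S -> D} :=
  [ffun s => if s == th then 0 else mu (lid s) (x s) * eta s].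

Lemma twist_mapE x s : s != th -> twist_map x s = mu (lid s) (x s) * eta s.
Proof. by move=> sn; rewrite ffunE (negbTE sn). Qed.

Lemma twist_map_mul_term (x y : {ffun S -> D}) s t : mul s t != th ->
  mu (lid (mul s t)) (x s * beta s (y t) * zeta s t) * eta (mul s t)
  = twist_map x s * alpha s (twist_map y t) * xi s t.
Proof.
move=> st; have sn := mul_neq_thl st; have tn := mul_neq_thr st.
case: act => _ _ hbeta hzeta.
have hs := lid_rid_mul st.
have [_ muM _ _] := mu_aut s; have [_ aM _ _] := alpha_aut sn.
rewrite lid_mul // !muM !twist_mapE // aM.
rewrite (hbeta s _ _ sn (lid_in s) (lid_in t) hs).
rewrite (hzeta s t _ _ (rid t) (lid_in s) (lid_in t) (rid_in t) hs (lid_rid_decomp t) st).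
by rewrite /rho !mulrA (mulrVK (eta_unit st)) (mulrVK (eta_unit sn)).
Qed.

Lemma skew_iso_twist : skew_iso mul th beta zeta alpha xi.
Proof.
exists twist_map; split=> [x hx | x y hx hy | z hz | x y hx hy | x y hx hy].
- by rewrite /skew_carrier ffunE eqxx.
- move=> /ffunP hxy; apply/ffunP => s; case: (eqVneq s th) => [-> | sn].
    by rewrite hx hy.
  have := hxy s; rewrite !twist_mapE // => /(mulIr (eta_unit sn)).
  by have [_ _ _ /bij_inj] := mu_aut s; apply.
- have [g hg] : exists g : S -> D, forall s, s != th ->
      mu (lid s) (g s) * eta s = z s.
    apply: (fin_all_exists (P := fun s d => s != th -> mu (lid s) d * eta s = z s)).
    move=> s; case: (eqVneq s th) => [-> | sn]; first by exists 0.
    have [_ _ _ [mu' _ mu'K]] := mu_aut s.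
    by exists (mu' (z s * (eta s)^-1)) => _; rewrite mu'K mulrVK ?eta_unit.
  exists [ffun s => if s == th then 0 else g s].
    by rewrite /skew_carrier ffunE eqxx.
  apply/ffunP => s; rewrite ffunE; case: eqP => [-> | /eqP sn]; first by rewrite hz.
  by rewrite ffunE (negbTE sn) hg.
- apply/ffunP => s; rewrite !ffunE; case: eqP => _; first by rewrite addr0.
  by have [muD _ _ _] := mu_aut s; rewrite muD mulrDl.
apply/ffunP => u; rewrite /skew_mul !ffunE; case: eqP => // /eqP un.
rewrite (ring_aut_sum _ _ (mu_aut u)) mulr_suml.
apply: eq_bigr => s sn; rewrite (ring_aut_sum _ _ (mu_aut u)) mulr_suml.
apply: eq_bigr => t /andP[_ /eqP tu]; subst u.
exact: twist_map_mul_term.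
Qed.

End TwistIso.

Section TwistCocycle.
Variables (D : unitRingType) (alpha : S -> D -> D) (xi : S -> S -> D) (eta : S -> D).
Hypothesis xi_cocycle : cocycle mul th alpha xi.
Hypothesis eta_unit : forall s, s != th -> eta s \is a GRing.unit.

Definition twist_aut s x := rho (eta s) (alpha s x).

Definition twist_factor s t :=
  eta s * alpha s (eta t) * xi s t * (eta (mul s t))^-1.

Lemma acts_to_twist :
  acts_to mul th E (fun _ => id) eta alpha xi twist_aut twist_factor.
Proof.
split=> [e _ | s | // | //]; first exact: ring_aut_id.
exact: eta_unit.
Qed.

Let alpha_aut s : s != th -> ring_aut (alpha s).
Proof. by case: xi_cocycle => h _ _ _; apply: h. Qed.
Let xi_unit s t : mul s t != th -> xi s t \is a GRing.unit.
Proof. by case: xi_cocycle => _ h _ _; apply: h. Qed.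

Lemma twist_factor_unit s t : mul s t != th -> twist_factor s t \is a GRing.unit.
Proof.
move=> st; have sn := mul_neq_thl st; have tn := mul_neq_thr st.
have [ua _] := ring_aut_unit (alpha_aut sn) (eta_unit tn).
by rewrite /twist_factor !unitrMl ?unitrV ?eta_unit ?xi_unit.
Qed.

Lemma twist_factor_cocycle s t u : mul (mul s t) u != th ->
  twist_aut s (twist_factor t u) * twist_factor s (mul t u)
  = twist_factor s t * twist_factor (mul s t) u.
Proof.
case: xi_cocycle => _ _ xi_assoc alpha_comp stu.
have st := mul_neq_thl stu; have sn := mul_neq_thl st.
have tu : mul t u != th by apply: (@mul_neq_thr s); rewrite mulA.
have [_ aM _ _] := alpha_aut sn.
have [ua aV] := ring_aut_unit (alpha_aut sn) (eta_unit tu).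
rewrite /twist_aut /twist_factor /rho !aM aV (alpha_comp s t st (eta u)) /rho.
rewrite !mulrA (mulrVK (eta_unit sn)) (mulrVK ua) (mulrVK (eta_unit st)).
rewrite mulA -(mulrA _ (alpha s (xi t u))) -mulA xi_assoc // mulrA.
by rewrite (mulrVK (xi_unit st)) mulA.
Qed.

Lemma twist_aut_comp s t x : mul s t != th ->
  twist_aut s (twist_aut t x) = rho (twist_factor s t) (twist_aut (mul s t) x).
Proof.
case: xi_cocycle => _ _ _ alpha_comp st.
have sn := mul_neq_thl st; have tn := mul_neq_thr st.
have [_ aM _ _] := alpha_aut sn.
have [ua aV] := ring_aut_unit (alpha_aut sn) (eta_unit tn).
have u1 : eta s * alpha s (eta t) \is a GRing.unit by rewrite unitrMl ?eta_unit.
have u2 : eta s * alpha s (eta t) * xi s t \is a GRing.unit by rewrite unitrMl ?xi_unit.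
have u3 : (eta (mul s t))^-1 \is a GRing.unit by rewrite unitrV eta_unit.
rewrite /twist_aut /twist_factor /rho !aM aV (alpha_comp s t st x) /rho.
rewrite (invrM u2 u3) invrK (invrM u1 (xi_unit st)) (invrM (eta_unit sn) ua).
by rewrite !mulrA !(mulrVK (eta_unit st)).
Qed.

Lemma cocycle_twist : cocycle mul th twist_aut twist_factor.
Proof.
split=> [s sn | s t st | s t u stu | s t st x].
- exact/ring_aut_comp/alpha_aut/sn/rho_ring_aut/eta_unit.
- exact: twist_factor_unit.
- exact: twist_factor_cocycle.
- exact: twist_aut_comp.
Qed.

End TwistCocycle.

Lemma cocycle_idem_rho (D : unitRingType) (alpha : S -> D -> D) xi e :
  cocycle mul th alpha xi -> e \in E -> forall x, alpha e x = rho (xi e e) x.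
Proof.
case=> alpha_aut _ _ alpha_comp he x.
have ee := idem_neq_th he.
have [_ _ _ [alpha' _ alpha'K]] := alpha_aut e (mul_neq_thl ee).
by rewrite -(alpha'K x) (alpha_comp e e ee) (idem_mul he).
Qed.

Definition normalizing_unit (D : unitRingType) (xi : S -> S -> D) s :=
  if s \in E then (xi s s)^-1 else 1.

Lemma normalizing_unit_unit (D : unitRingType) (alpha : S -> D -> D) xi :
  cocycle mul th alpha xi ->
  forall s, s != th -> normalizing_unit xi s \is a GRing.unit.
Proof.
move=> hco s; rewrite /normalizing_unit; case: ifP => [he _ | _ _]; last exact: unitr1.
by case: hco => _ h _ _; rewrite unitrV; apply/h/idem_neq_th.
Qed.

Lemma normal_cocycle_twist (D : unitRingType) (alpha : S -> D -> D) xi :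
  cocycle mul th alpha xi ->
  normal_cocycle E (twist_aut alpha (normalizing_unit xi))
                   (twist_factor alpha xi (normalizing_unit xi)).
Proof.
move=> hco e he; have xiu : xi e e \is a GRing.unit.
  by case: hco => _ h _ _; apply/h/idem_neq_th.
have etae : normalizing_unit xi e = (xi e e)^-1 by rewrite /normalizing_unit he.
rewrite /twist_aut /twist_factor (idem_mul he) etae.
split=> [x |]; rewrite (cocycle_idem_rho hco he) /rho invrK !mulrA mulVr // mul1r.
  by rewrite mulrVK.
by rewrite mulrVK // mulVr.
Qed.

Lemma skew_iso_cohomologous (D : unitRingType) (alpha beta : S -> D -> D)
    (xi zeta : S -> S -> D) (phi : S -> S) :
  (forall s, s != th -> ring_aut (alpha s)) -> semigroup_aut mul phi ->
  cohomologous mul th E (fun s => alpha (phi s)) (fun s t => xi (phi s) (phi t))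
    beta zeta ->
  skew_iso mul th beta zeta alpha xi.
Proof.
move=> alpha_aut phi_aut [mu [eta act]].
apply: (skew_iso_trans _ (skew_iso_relabel alpha xi phi_aut)).
apply: (skew_iso_twist _ act) => s sn.
by apply: alpha_aut; rewrite (semigroup_aut_eq_th phi_aut).
Qed.

Lemma normal_cocycle_skew_iso (D : unitRingType) (alpha : S -> D -> D) xi :
  cocycle mul th alpha xi ->
  exists (beta : S -> D -> D) (zeta : S -> S -> D),
    [/\ cocycle mul th beta zeta, normal_cocycle E beta zeta
      & skew_iso mul th beta zeta alpha xi].
Proof.
move=> hco; have eta_unit := normalizing_unit_unit hco.
exists (twist_aut alpha (normalizing_unit xi)),
  (twist_factor alpha xi (normalizing_unit xi)); split.
- exact: (cocycle_twist hco eta_unit).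
- exact: (normal_cocycle_twist hco).
apply: (skew_iso_twist _ (acts_to_twist _ _ eta_unit)).
by case: hco.
Qed.

End SquareFree.

Theorem mainTheorem1 (D : unitRingType) (S : finType) (mul : S -> S -> S)
    (th : S) (E : {set S}) :
  division_ring D -> square_free mul th E ->
  (forall (alpha beta : S -> D -> D) (xi zeta : S -> S -> D),
     cocycle mul th alpha xi -> cocycle mul th beta zeta ->
     (exists phi : S -> S, semigroup_aut mul phi /\
        cohomologous mul th E (fun s => alpha (phi s))
          (fun s t => xi (phi s) (phi t)) beta zeta) ->
     skew_iso mul th beta zeta alpha xi)
  /\
  (forall (alpha : S -> D -> D) (xi : S -> S -> D),
     cocycle mul th alpha xi ->
     exists (beta : S -> D -> D) (zeta : S -> S -> D),
       [/\ cocycle mul th beta zeta, normal_cocycle E beta zeta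
         & skew_iso mul th beta zeta alpha xi]).
(* The invertibility needed is part of the cocycle and action data. *)
Proof.
move=> _ sqS; split=> [alpha beta xi zeta [alpha_aut _ _ _] _ [phi []] | alpha xi].
  exact: skew_iso_cohomologous.
exact: normal_cocycle_skew_iso.
Qed.
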